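(* Let $G$ be an SE-graph and let $P,Q$ be standard, weakly intersecting directed paths in $G$ such that $\{\alpha(s_P),\alpha(t_P)\}\cap\{\alpha(s_Q),\alpha(t_Q)\}\cap\mathbb R_{>0}=\emptyset$. Then $w(P)w(Q)=w(Q)w(P)$.
   Context: Fix a field $\mathbb K$, $q\in\mathbb K^\ast$. An SE-graph is a finite directed graph $G=(V,E)$ embedded in the plane (planar) whose edges are horizontal directed to the right (H-edges) or vertical directed downward (V-edges), with sources $r_1,\dots,r_m$ on a vertical line in this order upward and sinks $c_1,\dots,c_n$ on a horizontal line in order left to right, sources incident only to H-edges and sinks only to V-edges, every vertex lying on a directed source-to-sink path. Here the sources lie on the ray $\{0\}\times\mathbb R_{\ge0}$ and the sinks on the ray $\mathbb R_{\ge 0}\times\{0\}$; a point $v$ has coordinates $(\alpha(v),\beta(v))$. Standing convention: two vertices have the same first (resp. second) coordinate if and only if they lie on a common vertical (resp. horizontal) directed path of $G$. Let $W$ be the inner vertices (neither sources nor sinks); $\mathcal L_G$ is the $\mathbb K$-algebra of Laurent polynomials in $W$ with, for distinct $u,v\in W$: $uv=qvu$ if there is a directed horizontal path from $u$ to $v$; $vu=quv$ if there is a directed vertical path from $u$ to $v$; $uv=vu$ otherwise. Edge weights: $w(e)=v$ if $e=(u,v)$ with $u$ a source; $w(e)=u^{-1}v$ for an H-edge $e=(u,v)$ with $u,v\in W$; $w(e)=1$ for V-edges. The weight of a directed path $e_1\cdots e_k$ is $w(e_1)\cdots w(e_k)$. For a directed path $P$, $s_P$ and $t_P$ are its first and last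 vertices. $P$ is standard if it contains at least one H-edge. Directed paths $P,Q$ are weakly intersecting if $P\cap Q=\{s_P,t_P\}\cap\{s_Q,t_Q\}$ (as point sets in the plane). *)

From HB Require Import structures.
From mathcomp Require Import all_boot all_order all_algebra.
From mathcomp Require Import reals.
Set Implicit Arguments. Unset Strict Implicit. Unset Printing Implicit Defensive.
Import Order.TTheory GRing.Theory Num.Theory.
Local Open Scope ring_scope.

Section SEGraph.
Variables (R : realType) (V : finType) (E : rel V) (alpha beta : V -> R).

Definition pt (v : V) : R * R := (alpha v, beta v).

Definition Hedge (u v : V) : bool := (beta u == beta v) && (alpha u < alpha v).
Definition Vedge (u v : V) : bool := (alpha u == alpha v) && (beta v < beta u).

Definition HE : rel V := fun u v => E u v && Hedge u v.
Definition VE : rel V := fun u v => E u v && Vedge u v.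

Definition hpath (u v : V) : bool := connect HE u v.
Definition vpath (u v : V) : bool := connect VE u v.

Definition onSeg (a b z : R * R) : Prop :=
  exists t : R, [/\ 0 <= t, t <= 1,
    z.1 = (1 - t) * a.1 + t * b.1 & z.2 = (1 - t) * a.2 + t * b.2].

Definition SE_graph (Src Snk : {set V}) : Prop :=
  [/\
      injective pt,
      (forall u v, E u v -> Hedge u v || Vedge u v),
      (* planar embedding: distinct edges meet only at common end vertices *)
      (forall u v u' v', E u v -> E u' v' -> (u, v) != (u', v') ->
         forall z, onSeg (pt u) (pt v) z -> onSeg (pt u') (pt v') z ->
           exists2 w, z = pt w & (w \in [:: u; v]) && (w \in [:: u'; v'])),
      (forall u v w, E u v -> onSeg (pt u) (pt v) (pt w) -> w = u \/ w = v)
    & [/\ [disjoint Src & Snk],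
          (forall s, s \in Src ->
             [/\ alpha s = 0, 0 <= beta s, (forall v, ~~ E v s)
               & (forall v, E s v -> Hedge s v)]),
          (forall t, t \in Snk ->
             [/\ beta t = 0, 0 <= alpha t, (forall v, ~~ E t v)
               & (forall v, E v t -> Vedge v t)]),
          (forall v, exists s, exists t,
             [/\ s \in Src, t \in Snk, connect E s v & connect E v t])
        &
          (forall u v, ~~ ((u \in Src) && (v \in Src)) ->
             (alpha u = alpha v <-> vpath u v \/ vpath v u)) /\
          (forall u v, ~~ ((u \in Snk) && (v \in Snk)) ->
             (beta u = beta v <-> hpath u v \/ hpath v u))]].

(* a directed path is given by its first vertex s and the list p of the
   remaining vertices, with [path E s p]; its last vertex is [last s p] *)
Definition pedges (s : V) (p : seq V) : seq (V * V) := zip (s :: p) p.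

Definition standard (s : V) (p : seq V) : bool :=
  has (fun e => Hedge e.1 e.2) (pedges s p).

Definition ptset (s : V) (p : seq V) (z : R * R) : Prop :=
  z = pt s \/ exists2 e, e \in pedges s p & onSeg (pt e.1) (pt e.2) z.

Definition weakly_intersecting (sP : V) (p : seq V) (sQ : V) (r : seq V) : Prop :=
  forall z, (ptset sP p z /\ ptset sQ r z) <->
    ((z = pt sP \/ z = pt (last sP p)) /\ (z = pt sQ \/ z = pt (last sQ r))).

Section Weights.
Variables (Src Snk : {set V}) (K : fieldType) (A : unitAlgType K) (x : V -> A).

Definition inner (v : V) : bool := (v \notin Src) && (v \notin Snk).

(* the elements x v (v inner) are invertible and satisfy the defining
   q-commutation relations of L_G *)
Definition LG_relations (q : K) : Prop :=
  (forall v, inner v -> x v \is a GRing.unit) /\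
  (forall u v, inner u -> inner v -> u != v ->
     [/\ (hpath u v -> x u * x v = q *: (x v * x u)),
         (vpath u v -> x v * x u = q *: (x u * x v))
       & (~~ hpath u v -> ~~ hpath v u -> ~~ vpath u v -> ~~ vpath v u ->
            x u * x v = x v * x u)]).

Definition edge_weight (u v : V) : A :=
  if u \in Src then x v
  else if Hedge u v && inner u && inner v then (x u)^-1 * x v
  else 1.

Definition pweight (s : V) (p : seq V) : A :=
  \prod_(e <- pedges s p) edge_weight e.1 e.2.

End Weights.
End SEGraph.

(* Both weights are ordered products of letters x_v^(+-1): an edge leaving a source
   contributes x_v, an inner H-edge (u, v) contributes x_u^-1 x_v.  Any two letters
   q-commute, so w(P) w(Q) = q^N w(Q) w(P), where N sums the commutation exponents
   over all pairs (letter of P, letter of Q); it splits into a row part and a column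
   part, both of which vanish.
   Row part: two H-edges of P and Q on a common row span disjoint intervals, so all
   four pairs of endpoints carry the same exponent, while the signs of the letters of
   an edge add up to 0 unless the edge leaves a source; two source edges lie at
   abscissa 0, where the exponent is 0.
   Column part: in a column g > 0 the paths cannot cross, so Q lies entirely above or
   entirely below P there and the exponent only depends on g.  The signed count of
   the letters of a path in column g telescopes to [t in column g] - [s in column g],
   and the hypothesis on the abscissae of the endpoints makes the total vanish. *)

From HB Require Import structures.
From mathcomp Require Import all_boot all_order all_algebra.
From mathcomp Require Import reals.
From mathcomp Require Import ring lra.
Import Order.TTheory GRing.Theory Num.Theory.
Local Open Scope ring_scope.
Set Implicit Arguments. Unset Strict Implicit.

Section QCommutation.
Variables (K : fieldType) (A : unitAlgType K).

Lemma scale_eqV (a b : A) (c : K) : c != 0 -> a = c *: b -> b = c^-1 *: a.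
Proof. by move=> c0 ->; rewrite scalerK. Qed.

Lemma qcomm_invl (a b : A) (c : K) : a \is a GRing.unit -> c != 0 ->
  a * b = c *: (b * a) -> a^-1 * b = c^-1 *: (b * a^-1).
Proof.
move=> ua c0 ab; apply: scale_eqV => //.
by rewrite -{1}(mulKr ua b) ab -scalerAr -scalerAl mulrA mulrK.
Qed.

Lemma qcomm_invr (a b : A) (c : K) : b \is a GRing.unit -> c != 0 ->
  a * b = c *: (b * a) -> a * b^-1 = c^-1 *: (b^-1 * a).
Proof.
move=> ub c0 ab; apply: scale_eqV => //.
by rewrite -{1}(mulrK ub a) ab -scalerAl -scalerAr !mulrA mulVr // mul1r.
Qed.

Definition sgb (b : bool) : int := if b then 1 else -1.

Lemma qcomm_sgb (a b : A) (c : K) (i j : bool) :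
  a \is a GRing.unit -> b \is a GRing.unit -> c != 0 -> a * b = c *: (b * a) ->
  a ^ sgb i * b ^ sgb j = c ^ (sgb i * sgb j) *: (b ^ sgb j * a ^ sgb i).
Proof.
move=> ua ub c0 ab; have ci0 : c^-1 != 0 by rewrite invr_eq0.
case: i; case: j; rewrite /sgb ?mulN1r ?mulrN1 ?mul1r ?opprK ?expr1z ?exprN1 //.
- exact: qcomm_invr.
- exact: qcomm_invl.
- by have := qcomm_invl ua ci0 (qcomm_invr ub c0 ab); rewrite invrK.
Qed.

Variables (T : eqType) (val : T -> A) (kap : T -> T -> int) (q : K).
Hypothesis q0 : q != 0.

Lemma mul_prod_qcomm (a : T) (t : seq T) :
  {in t, forall m, val a * val m = q ^ kap a m *: (val m * val a)} ->
  val a * \prod_(m <- t) val m =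
  q ^ (\sum_(m <- t) kap a m) *: (\prod_(m <- t) val m * val a).
Proof.
elim: t => [|m t IH] qc; first by rewrite !big_nil mulr1 mul1r expr0z scale1r.
rewrite !big_cons mulrA qc ?mem_head // -scalerAl -[val m * val a * _]mulrA IH; last first.
  by move=> m' tm'; apply: qc; rewrite in_cons tm' orbT.
by rewrite -scalerAr scalerA -expfzDr // mulrA.
Qed.

Lemma prod_qcomm (s t : seq T) :
  {in s & t, forall l m, val l * val m = q ^ kap l m *: (val m * val l)} ->
  \prod_(l <- s) val l * \prod_(m <- t) val m =
  q ^ (\sum_(l <- s) \sum_(m <- t) kap l m) *:
    (\prod_(m <- t) val m * \prod_(l <- s) val l).
Proof.
elim: s => [|l s IH] qc; first by rewrite !big_nil mulr1 mul1r expr0z scale1r.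
rewrite !big_cons -mulrA IH; last first.
  by move=> l' m sl' tm; apply: qc; rewrite ?in_cons ?sl' ?orbT.
rewrite -scalerAr [val l * (_ * _)]mulrA mul_prod_qcomm; last first.
  by move=> m tm; apply: qc; rewrite ?mem_head.
by rewrite -scalerAl scalerA -expfzDr // addrC mulrA.
Qed.

End QCommutation.

Section PathEdges.
Variable V : finType.
Implicit Types (E : rel V) (s : V) (p : seq V) (e : V * V).

Lemma pedges_cons s v p : pedges s (v :: p) = (s, v) :: pedges v p.
Proof. by []. Qed.

Lemma mem_pedges s p e : e \in pedges s p -> e.1 \in s :: p /\ e.2 \in s :: p.
Proof.
elim: p s => [|v p IH] s //; rewrite pedges_cons in_cons => /predU1P [-> | /IH [h1 h2]].
  by rewrite !inE !eqxx orbT.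
by split; rewrite in_cons ?h1 ?h2 orbT.
Qed.

Lemma path_pedges E s p e : path E s p -> e \in pedges s p -> E e.1 e.2.
Proof.
elim: p s => [|v p IH] s //= /andP [Esv vp].
by rewrite pedges_cons in_cons => /predU1P [-> | /(IH _ vp)].
Qed.

Lemma telescope_pedges (Z : zmodType) (f : V -> Z) s p :
  \sum_(e <- pedges s p) (f e.2 - f e.1) = f (last s p) - f s.
Proof.
elim: p s => [|v p IH] s; first by rewrite big_nil subrr.
by rewrite pedges_cons big_cons IH /= addrC addrA subrK.
Qed.

Lemma connect_first E x y : x != y -> connect E x y -> exists z, E x z.
Proof.
move=> nxy /connectP [[|z p] /= xp yl]; first by rewrite yl eqxx in nxy.
by case/andP: xp => Exz _; exists z.
Qed.

Lemma connect_last E x y : x != y -> connect E x y -> exists z, E z y.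
Proof.
move=> nxy /connectP [p]; case/lastP: p => [|p z] /=.
  by move=> _ yx; rewrite yx eqxx in nxy.
by rewrite rcons_path last_rcons => /andP [_ Ez] ->; exists (last x p).
Qed.

Lemma connect_eq_lt (U : Type) (d : Order.disp_t) (O : porderType d)
    E (f : V -> U) (g : V -> O) :
  (forall a b, E a b -> f a = f b /\ (g a < g b)%O) ->
  forall u v, connect E u v -> f u = f v /\ (u = v \/ (g u < g v)%O).
Proof.
move=> step u v /connectP [p]; elim: p u => [|w p IH] u /=.
  by move=> _ ->; split; [|left].
case/andP => /step [fuw guw] /IH h /h [fwv [wv|gwv]]; split; rewrite ?fuw //; right.
  by rewrite -wv.
exact: lt_trans gwv.
Qed.

End PathEdges.

Section Plane.
Variables (R : realType) (V : finType) (alpha beta : V -> R).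
Implicit Types (a b : R * R) (u v w s : V) (p : seq V).

Lemma onSeg_hor a b c : a.2 = b.2 -> a.1 < b.1 -> a.1 <= c <= b.1 -> onSeg a b (c, a.2).
Proof.
move=> ab2 ab1 /andP [ac cb]; have d0 : b.1 - a.1 != 0 by rewrite subr_eq0 gt_eqF.
exists ((c - a.1) / (b.1 - a.1)); split => /=.
- by rewrite divr_ge0 // subr_ge0 // ltW.
- by rewrite ler_pdivrMr ?subr_gt0 // mul1r lerD2r.
- by field.
- by rewrite -ab2; ring.
Qed.

Lemma onSeg_ver a b c : a.1 = b.1 -> b.2 < a.2 -> b.2 <= c <= a.2 -> onSeg a b (a.1, c).
Proof.
move=> ab1 ba2 /andP [bc ca]; have d0 : a.2 - b.2 != 0 by rewrite subr_eq0 gt_eqF.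
exists ((a.2 - c) / (a.2 - b.2)); split => /=.
- by rewrite divr_ge0 // subr_ge0 // ltW.
- by rewrite ler_pdivrMr ?subr_gt0 // mul1r lerD2l lerN2.
- by rewrite -ab1; ring.
- by field.
Qed.

Lemma onSeg_end a b : onSeg a b b.
Proof. by exists 1; split=> //=; ring. Qed.

Lemma ptset_cons s v p z : ptset alpha beta v p z -> ptset alpha beta s (v :: p) z.
Proof.
case=> [-> | [e ep ez]]; right; first by exists (s, v); [exact: mem_head | exact: onSeg_end].
by exists e; rewrite // pedges_cons in_cons ep orbT.
Qed.

Lemma ptset_vertex s p u : u \in s :: p -> ptset alpha beta s p (pt alpha beta u).
Proof.
elim: p s => [|v p IH] s; first by rewrite inE => /eqP ->; left.
by rewrite in_cons => /predU1P [->|/IH]; [left | exact: ptset_cons].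
Qed.

Lemma ptset_edge s p e z : e \in pedges s p ->
  onSeg (pt alpha beta e.1) (pt alpha beta e.2) z -> ptset alpha beta s p z.
Proof. by move=> ep ez; right; exists e. Qed.

Lemma Hedge_notVedge u v : Hedge alpha beta u v -> ~~ Vedge alpha beta u v.
Proof. by case/andP => _ auv; rewrite /Vedge lt_eqF. Qed.

Lemma Hedge_ends u v w : Hedge alpha beta u v -> w \in [:: u; v] ->
  beta w = beta u /\ alpha u <= alpha w <= alpha v.
Proof.
by case/andP => /eqP buv /ltW auv; rewrite !inE => /orP [] /eqP ->; rewrite ?buv lexx auv.
Qed.

Definition crow u v : int := if beta u == beta v then sgz (alpha v - alpha u) else 0.
Definition ccol u v : int := if alpha u == alpha v then sgz (beta v - beta u) else 0.
Definition qexp u v : int := crow u v + ccol u v.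
Definition letter_qexp (l m : V * bool) : int := qexp l.1 m.1 * (sgb l.2 * sgb m.2).

End Plane.

Section SEGraph.
Variables (R : realType) (V : finType) (E : rel V) (alpha beta : V -> R)
  (Src Snk : {set V}).
Hypothesis G : SE_graph E alpha beta Src Snk.
Implicit Types (s t u v w : V) (p : seq V) (e : V * V).

Lemma edge_HV u v : E u v -> Hedge alpha beta u v || Vedge alpha beta u v.
Proof. by case: G => _ + _ _ _; apply. Qed.

Lemma sourceP s : s \in Src ->
  [/\ alpha s = 0, 0 <= beta s, forall v, ~~ E v s & forall v, E s v -> Hedge alpha beta s v].
Proof. by case: G => _ _ _ _ [_ + _ _ _]; apply. Qed.

Lemma sinkP t : t \in Snk ->
  [/\ beta t = 0, 0 <= alpha t, forall v, ~~ E t v & forall v, E v t -> Vedge alpha beta v t].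
Proof. by case: G => _ _ _ _ [_ _ + _ _]; apply. Qed.

Lemma reachable v : exists s t, [/\ s \in Src, t \in Snk, connect E s v & connect E v t].
Proof. by case: G => _ _ _ _ [_ _ _ + _]; apply. Qed.

Lemma column_convention u v : ~~ ((u \in Src) && (v \in Src)) ->
  alpha u = alpha v <-> vpath E alpha beta u v \/ vpath E alpha beta v u.
Proof. by case: G => _ _ _ _ [_ _ _ _ [+ _]]; apply. Qed.

Lemma row_convention u v : ~~ ((u \in Snk) && (v \in Snk)) ->
  beta u = beta v <-> hpath E alpha beta u v \/ hpath E alpha beta v u.
Proof. by case: G => _ _ _ _ [_ _ _ _ [_ +]]; apply. Qed.

Lemma edge_mono u v : E u v -> alpha u <= alpha v /\ beta v <= beta u.
Proof. by case/edge_HV/orP => /andP [/eqP -> /ltW ->]; rewrite lexx. Qed.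

Lemma path_mono s p w : path E s p -> w \in s :: p ->
  alpha s <= alpha w /\ beta w <= beta s.
Proof.
elim: p s => [|v p IH] s /=; first by move=> _; rewrite inE => /eqP ->; rewrite !lexx.
case/andP => /edge_mono [asv bvs] /IH {}IH; rewrite in_cons => /predU1P [->|/IH [avw bwv]].
  by rewrite !lexx.
by split; [exact: le_trans asv avw | exact: le_trans bwv bvs].
Qed.

Lemma alpha_ge0 v : 0 <= alpha v.
Proof.
have [s [t [sS _ /connectP [p sp ->] _]]] := reachable v.
by have [as0 _ _ _] := sourceP sS; rewrite -as0; case: (path_mono sp (mem_last s p)).
Qed.

Lemma hpath_inv u v :
  hpath E alpha beta u v -> beta u = beta v /\ (u = v \/ alpha u < alpha v).
Proof. by apply: connect_eq_lt => a b /andP [_ /andP [/eqP]]. Qed.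

Lemma vpath_inv u v :
  vpath E alpha beta u v -> alpha u = alpha v /\ (u = v \/ beta v < beta u).
Proof.
have step a b : VE E alpha beta a b -> alpha a = alpha b /\ - beta a < - beta b.
  by case/andP => _ /andP [/eqP -> ba]; rewrite ltrN2.
by case/(connect_eq_lt step) => -> [->|h]; split=> //; [left | right; rewrite -ltrN2].
Qed.

Lemma alpha_gt0 v : v \notin Src -> 0 < alpha v.
Proof.
move=> vS; rewrite lt_def alpha_ge0 andbT; apply/eqP => av0.
have [s [_ [sS _ _ _]]] := reachable v; have [as0 _ no_in Hout] := sourceP sS.
have nvs : v != s by apply: contraNneq vS => ->.
have vsS : ~~ ((v \in Src) && (s \in Src)) by rewrite (negbTE vS).
have [|] := (column_convention vsS).1 (etrans av0 (esym as0)).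
  case/(connect_last nvs) => z /andP [Ezs _].
  by rewrite (negbTE (no_in z)) in Ezs.
rewrite eq_sym in nvs; case/(connect_first nvs) => z /andP [Esz Vsz].
by rewrite (negbTE (Hedge_notVedge (Hout z Esz))) in Vsz.
Qed.

Lemma edge_head_inner u v : E u v -> Hedge alpha beta u v -> inner Src Snk v.
Proof.
move=> Euv Huv; apply/andP; split; apply/negP.
  by case/sourceP => _ _ /(_ u); rewrite Euv.
case/sinkP => _ _ _ /(_ u Euv) Vuv.
by rewrite (negbTE (Hedge_notVedge Huv)) in Vuv.
Qed.

Lemma edge_tail_notin_Snk u v : E u v -> u \notin Snk.
Proof. by move=> Euv; apply/negP => /sinkP [_ _ /(_ v)]; rewrite Euv. Qed.

Lemma ptset_column s p u w y : path E s p -> u \in s :: p -> w \in s :: p ->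
  alpha u = alpha w -> beta w <= y <= beta u -> ptset alpha beta s p (alpha u, y).
Proof.
elim: p s u w => [|v p IH] s u w sp uP wP auw /andP [wy yu].
  move: uP wP; rewrite !inE => /eqP us /eqP ws; subst u w.
  have -> : y = beta s by apply: le_anti; rewrite yu wy.
  by left.
case/andP: (sp) => Esv vp; case/predU1P: wP => [ws|wP].
  have [_ bus] := path_mono sp uP; rewrite ws in wy.
  have -> : y = beta u by apply: le_anti; rewrite yu (le_trans bus wy).
  exact: ptset_vertex.
case/predU1P: uP => [us|uP]; last by apply: ptset_cons; apply: (IH v u w); rewrite ?wy.
have [asv _] := edge_mono Esv; have [avw _] := path_mono vp wP.
have avs : alpha v = alpha s by apply: le_anti; rewrite asv -us auw avw.
have /andP [_ bvs] : Vedge alpha beta s v.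
  by case/orP: (edge_HV Esv) => // /andP [_]; rewrite avs ltxx.
rewrite us; case: (leP (beta v) y) => [vy | yv].
  apply: (ptset_edge (e := (s, v))); first by rewrite pedges_cons mem_head.
  by apply: onSeg_ver => //=; rewrite vy -us.
apply: ptset_cons; rewrite -avs; apply: (IH v v w) => //; first exact: mem_head.
  by rewrite avs -us.
by rewrite wy ltW.
Qed.

(* The letter (v, b) stands for [x v ^ sgb b]. *)
Definition edge_letters e : seq (V * bool) :=
  if e.1 \in Src then [:: (e.2, true)]
  else if Hedge alpha beta e.1 e.2 && inner Src Snk e.1 && inner Src Snk e.2
  then [:: (e.1, false); (e.2, true)] else [::].

Definition path_letters s p : seq (V * bool) :=
  flatten [seq edge_letters e | e <- pedges s p].

Variant edge_letters_spec e : seq (V * bool) -> Prop :=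
  | EdgeLettersNone of alpha e.1 = alpha e.2 : edge_letters_spec e [::]
  | EdgeLettersSource of e.1 \in Src & Hedge alpha beta e.1 e.2 & inner Src Snk e.2 :
      edge_letters_spec e [:: (e.2, true)]
  | EdgeLettersInner of Hedge alpha beta e.1 e.2 & inner Src Snk e.1 & inner Src Snk e.2 :
      edge_letters_spec e [:: (e.1, false); (e.2, true)].

Lemma edge_lettersP e : E e.1 e.2 -> edge_letters_spec e (edge_letters e).
Proof.
move=> Ee; rewrite /edge_letters; case: ifPn => [eS | eS].
  have [_ _ _ /(_ _ Ee) He] := sourceP eS.
  by constructor; last exact: edge_head_inner Ee He.
case: ifPn => [/andP [/andP [He ie1] ie2] | nHe]; first by constructor.
constructor; case/orP: (edge_HV Ee) => [He | /andP [/eqP //]].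
case/negP: nHe; rewrite He (edge_head_inner Ee He) andbT /inner eS.
exact: edge_tail_notin_Snk Ee.
Qed.

Lemma edge_letters_Hedge e : E e.1 e.2 -> edge_letters e != [::] -> Hedge alpha beta e.1 e.2.
Proof. by case/edge_lettersP. Qed.

Lemma edge_letters_ends e l : l \in edge_letters e -> l.1 \in [:: e.1; e.2].
Proof.
rewrite /edge_letters; case: ifP => _; first by rewrite !inE => /eqP ->; rewrite eqxx orbT.
by case: ifP => _ //; rewrite !inE => /orP [] /eqP ->; rewrite eqxx ?orbT.
Qed.

Lemma sum_edge_letters_sgb e : \sum_(l <- edge_letters e) sgb l.2 = (e.1 \in Src)%:R.
Proof.
rewrite /edge_letters; have [eS | eS] := boolP (e.1 \in Src).
  by rewrite big_cons big_nil.
by case: ifP => _; rewrite ?big_cons big_nil.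
Qed.

Lemma edge_letters_inner e l : E e.1 e.2 -> l \in edge_letters e -> inner Src Snk l.1.
Proof.
case/edge_lettersP => [_ | _ _ ie2 | _ ie1 ie2] //; rewrite !inE; first by move/eqP ->.
by case/orP => /eqP ->.
Qed.

Lemma path_letters_inner s p l : path E s p -> l \in path_letters s p ->
  inner Src Snk l.1 /\ l.1 \in s :: p.
Proof.
move=> sp /flattenP [_ /mapP [e ep ->] le].
split; first exact: edge_letters_inner (path_pedges sp ep) le.
have [e1P e2P] := mem_pedges ep.
by move: (edge_letters_ends le); rewrite !inE => /orP [] /eqP ->.
Qed.

Lemma sum_path_letters (phi : R -> int) s p : path E s p -> phi 0 = 0 ->
  \sum_(l <- path_letters s p) sgb l.2 * phi (alpha l.1) =
  phi (alpha (last s p)) - phi (alpha s).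
Proof.
move=> sp phi0; rewrite -(telescope_pedges (phi \o alpha)) /path_letters big_flatten big_map.
apply: eq_big_seq => e /(path_pedges sp) /edge_lettersP [ae | eS _ _ | _ _ _] /=.
- by rewrite big_nil ae subrr.
- by have [-> _ _ _] := sourceP eS; rewrite big_cons big_nil phi0 subr0 mul1r addr0.
- by rewrite !big_cons big_nil mulN1r mul1r addr0 addrC.
Qed.

Section Weights.
Variables (K : fieldType) (q : K) (A : unitAlgType K) (x : V -> A).

Definition letter_val (l : V * bool) : A := x l.1 ^ sgb l.2.

Lemma pweight_letters s p :
  pweight alpha beta Src Snk x s p = \prod_(l <- path_letters s p) letter_val l.
Proof.
rewrite /pweight /path_letters big_flatten big_map; apply: eq_bigr => e _.
rewrite /edge_weight /edge_letters /letter_val.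
by case: ifP => _; [|case: ifP => _]; rewrite ?big_cons big_nil /= ?expr1z ?exprN1 ?mulr1.
Qed.

Hypotheses (q0 : q != 0) (LG : LG_relations E alpha beta Src Snk x q).

Lemma x_qcomm u v : inner Src Snk u -> inner Src Snk v ->
  x u * x v = q ^ qexp alpha beta u v *: (x v * x u).
Proof.
move=> iu iv; have [_ xrel] := LG.
have [<-|nuv] := eqVneq u v.
  by rewrite /qexp /crow /ccol !eqxx !subrr sgz0 addr0 expr0z scale1r.
have nvu : v != u by rewrite eq_sym.
have [uvH uvV uvO] := xrel u v iu iv nuv; have [vuH vuV _] := xrel v u iv iu nvu.
case/andP: iu => uS uT; rewrite /qexp /crow /ccol.
have [buv | nbuv] := eqVneq (beta u) (beta v).
  have uvT : ~~ ((u \in Snk) && (v \in Snk)) by rewrite (negbTE uT).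
  have [/(_ buv) [] huv _] := row_convention uvT.
    have [_ [/eqP|auv]] := hpath_inv huv; first by rewrite (negbTE nuv).
    by rewrite (lt_eqF auv) gtr0_sgz ?subr_gt0 // addr0 expr1z uvH.
  have [_ [/eqP|avu]] := hpath_inv huv; first by rewrite (negbTE nvu).
  rewrite (gt_eqF avu) ltr0_sgz ?subr_lt0 // addr0 exprN1.
  exact/scale_eqV/vuH.
rewrite add0r.
have [auv | nauv] := eqVneq (alpha u) (alpha v).
  have uvS : ~~ ((u \in Src) && (v \in Src)) by rewrite (negbTE uS).
  have [/(_ auv) [] huv _] := column_convention uvS.
    have [_ [/eqP|bvu]] := vpath_inv huv; first by rewrite (negbTE nuv).
    rewrite ltr0_sgz ?subr_lt0 // exprN1.
    exact/scale_eqV/uvV.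
  have [_ [/eqP|buv]] := vpath_inv huv; first by rewrite (negbTE nvu).
  by rewrite gtr0_sgz ?subr_gt0 // expr1z vuV.
rewrite expr0z scale1r; apply: uvO; apply/negP.
- by case/hpath_inv => buv _; rewrite buv eqxx in nbuv.
- by case/hpath_inv => buv _; rewrite buv eqxx in nbuv.
- by case/vpath_inv => auv _; rewrite auv eqxx in nauv.
- by case/vpath_inv => auv _; rewrite auv eqxx in nauv.
Qed.

Lemma letter_qcomm l m : inner Src Snk l.1 -> inner Src Snk m.1 ->
  letter_val l * letter_val m =
  q ^ letter_qexp alpha beta l m *: (letter_val m * letter_val l).
Proof.
move=> il im; have [xunit _] := LG.
rewrite /letter_qexp -exprz_exp; apply: qcomm_sgb; rewrite ?xunit ?expfz_neq0 //.
exact: x_qcomm.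
Qed.

End Weights.

Section TwoPaths.
Variables (sP : V) (p : seq V) (sQ : V) (r : seq V).
Hypotheses (pP : path E sP p) (pQ : path E sQ r).
Hypothesis weakPQ : weakly_intersecting alpha beta sP p sQ r.
Hypothesis endsPQ : forall a : R, 0 < a ->
  (a = alpha sP \/ a = alpha (last sP p)) -> (a = alpha sQ \/ a = alpha (last sQ r)) -> False.

Lemma no_common_point z :
  ptset alpha beta sP p z -> ptset alpha beta sQ r z -> 0 < z.1 -> False.
Proof.
move=> zP zQ z_pos; have [zPe zQe] := (weakPQ z).1 (conj zP zQ).
apply: (endsPQ z_pos); [case: zPe | case: zQe] => ->; by [left | right].
Qed.

Lemma Hedges_separated e f : e \in pedges sP p -> f \in pedges sQ r ->
  Hedge alpha beta e.1 e.2 -> Hedge alpha beta f.1 f.2 -> beta e.1 = beta f.1 ->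
  alpha e.2 < alpha f.1 \/ alpha f.2 < alpha e.1.
Proof.
move=> eP fQ /andP [/eqP be ae] /andP [/eqP bf af] bef.
case: (ltP (alpha e.2) (alpha f.1)) => [|fe]; first by left.
case: (ltP (alpha f.2) (alpha e.1)) => [|ef]; first by right.
exfalso; have [_ e2P] := mem_pedges eP; have [_ f2Q] := mem_pedges fQ.
case: (leP (alpha e.2) (alpha f.2)) => ef2.
  apply: (@no_common_point (pt alpha beta e.2)); first exact: ptset_vertex.
    apply: (ptset_edge fQ); rewrite /pt -be bef; apply: onSeg_hor => //=.
    by rewrite fe ef2.
  exact: le_lt_trans (alpha_ge0 _) ae.
apply: (@no_common_point (pt alpha beta f.2)); [|exact: ptset_vertex|].
  apply: (ptset_edge eP); rewrite /pt -bf -bef; apply: onSeg_hor => //=.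
  by rewrite ef ltW.
exact: le_lt_trans (alpha_ge0 _) af.
Qed.

Lemma crow_Hedge_ends e f a b : e \in pedges sP p -> f \in pedges sQ r ->
  Hedge alpha beta e.1 e.2 -> Hedge alpha beta f.1 f.2 ->
  a \in [:: e.1; e.2] -> b \in [:: f.1; f.2] ->
  crow alpha beta a b = crow alpha beta e.1 f.1.
Proof.
move=> eP fQ He Hf ae bf; rewrite /crow.
have [-> /andP [e1a ae2]] := Hedge_ends He ae; have [-> /andP [f1b bf2]] := Hedge_ends Hf bf.
have [bef|//] := eqVneq (beta e.1) (beta f.1).
case: (Hedges_separated eP fQ He Hf bef) => sep.
  by rewrite !gtr0_sgz ?subr_gt0 //; lra.
by rewrite !ltr0_sgz ?subr_lt0 //; lra.
Qed.

Lemma row_edge_pair e f : e \in pedges sP p -> f \in pedges sQ r ->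
  \sum_(l <- edge_letters e) \sum_(m <- edge_letters f)
    crow alpha beta l.1 m.1 * (sgb l.2 * sgb m.2) = 0.
Proof.
move=> eP fQ; have [-> | ] := eqVneq (edge_letters e) [::]; first by rewrite big_nil.
move/(edge_letters_Hedge (path_pedges pP eP)) => He.
have [-> | ] := eqVneq (edge_letters f) [::]; first by rewrite big1 // => l _; rewrite big_nil.
move/(edge_letters_Hedge (path_pedges pQ fQ)) => Hf.
transitivity (crow alpha beta e.1 f.1 *
  ((\sum_(l <- edge_letters e) sgb l.2) * \sum_(m <- edge_letters f) sgb m.2)).
  rewrite mulr_suml mulr_sumr; apply: eq_big_seq => l le.
  rewrite !mulr_sumr; apply: eq_big_seq => m me.
  by rewrite (crow_Hedge_ends eP fQ He Hf (edge_letters_ends le) (edge_letters_ends me)).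
rewrite !sum_edge_letters_sgb.
have [eS|_] := boolP (e.1 \in Src); have [fS|_] := boolP (f.1 \in Src);
  rewrite ?mulr0 ?mul0r //.
have [[ae _ _ _] [af _ _ _]] := (sourceP eS, sourceP fS).
by rewrite /crow ae af subrr sgz0 if_same mul0r.
Qed.

Lemma sum_crow_letters_eq0 : \sum_(l <- path_letters sP p) \sum_(m <- path_letters sQ r)
  crow alpha beta l.1 m.1 * (sgb l.2 * sgb m.2) = 0.
Proof.
rewrite /path_letters big_flatten big_map; apply: big1_seq => e /andP [_ eP].
rewrite exchange_big big_flatten big_map; apply: big1_seq => f /andP [_ fQ].
by rewrite exchange_big row_edge_pair.
Qed.

Lemma column_no_cross u u' v v' :
  u \in sP :: p -> u' \in sP :: p -> v \in sQ :: r -> v' \in sQ :: r ->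
  alpha u' = alpha u -> alpha v = alpha u -> alpha v' = alpha u -> 0 < alpha u ->
  beta v < beta u -> beta u' < beta v' -> False.
Proof.
move=> uP u'P vQ v'Q au' av av' au_pos vu u'v'.
(* The vertical segments of P between u, u' and of Q between v, v' overlap. *)
case: (leP (beta u) (beta v')) => [uv' | v'u].
  apply: (@no_common_point (alpha u, beta u)) => //; first exact: (ptset_vertex _ _ uP).
  rewrite -av'; apply: (ptset_column pQ v'Q vQ); first by rewrite av av'.
  by rewrite (ltW vu) uv'.
apply: (@no_common_point (alpha v', beta v')); last by rewrite av'.
  rewrite av'; apply: (ptset_column pP uP u'P); first by rewrite au'.
  by rewrite (ltW u'v') (ltW v'u).
exact: (ptset_vertex _ _ v'Q).
Qed.

Lemma column_beta_neq u v : u \in sP :: p -> v \in sQ :: r ->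
  alpha v = alpha u -> 0 < alpha u -> beta v != beta u.
Proof.
move=> uP vQ av au_pos; apply/eqP => bv.
apply: (@no_common_point (pt alpha beta u)) => //; first exact: ptset_vertex.
by rewrite /pt -av -bv; exact: (ptset_vertex _ _ vQ).
Qed.

Lemma ccol_column_const u v u' v' :
  u \in sP :: p -> v \in sQ :: r -> u' \in sP :: p -> v' \in sQ :: r ->
  alpha v = alpha u -> alpha u' = alpha u -> alpha v' = alpha u -> 0 < alpha u ->
  ccol alpha beta u v = ccol alpha beta u' v'.
Proof.
move=> uP vQ u'P v'Q av au' av' au_pos.
have au'_pos : 0 < alpha u' by rewrite au'.
have av'u' : alpha v' = alpha u' by rewrite av' au'.
rewrite /ccol av au' av' !eqxx.
have [vu|uv|/eqP] := ltgtP (beta v) (beta u).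
- have [v'u'|u'v'|/eqP] := ltgtP (beta v') (beta u').
  + by rewrite !ltr0_sgz ?subr_lt0.
  + by case: (column_no_cross uP u'P vQ v'Q au' av av' au_pos vu u'v').
  + by rewrite (negbTE (column_beta_neq u'P v'Q av'u' au'_pos)).
- have [v'u'|u'v'|/eqP] := ltgtP (beta v') (beta u').
  + by case: (column_no_cross u'P uP v'Q vQ (esym au') av'u' (etrans av (esym au')) au'_pos
      v'u' uv).
  + by rewrite !gtr0_sgz ?subr_gt0.
  + by rewrite (negbTE (column_beta_neq u'P v'Q av'u' au'_pos)).
- by rewrite (negbTE (column_beta_neq uP vQ av au_pos)).
Qed.

(* +1 if Q passes above P in column g, -1 if below; well defined by [ccol_side]. *)
Definition column_side (g : R) : int :=
  if [pick u | (u \in sP :: p) && (alpha u == g)] is Some u then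
    if [pick v | (v \in sQ :: r) && (alpha v == g)] is Some v then ccol alpha beta u v else 0
  else 0.

Lemma ccol_side u v : u \in sP :: p -> v \in sQ :: r -> alpha v = alpha u -> 0 < alpha u ->
  ccol alpha beta u v = column_side (alpha u).
Proof.
move=> uP vQ av au_pos; rewrite /column_side.
case: pickP => [u0 /andP [u0P /eqP au0] | /(_ u)]; last by rewrite uP eqxx.
case: pickP => [v0 /andP [v0Q /eqP av0] | /(_ v)]; last by rewrite vQ av eqxx.
exact: ccol_column_const.
Qed.

Lemma sum_ccol_vertex_letters u : u \in sP :: p -> 0 < alpha u ->
  \sum_(m <- path_letters sQ r) ccol alpha beta u m.1 * sgb m.2 =
  column_side (alpha (last sQ r)) * (alpha u == alpha (last sQ r))%:R
    - column_side (alpha sQ) * (alpha u == alpha sQ)%:R.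
Proof.
move=> uP au_pos.
have side_eq b :
    column_side (alpha u) * (b == alpha u)%:R = column_side b * (alpha u == b)%:R.
  by have [->|_] := eqVneq b (alpha u); rewrite // !mulr0n !mulr0.
rewrite -!side_eq -mulrBr.
rewrite -(sum_path_letters (phi := fun a => (a == alpha u)%:R) pQ) ?(lt_eqF au_pos) //.
rewrite mulr_sumr; apply: eq_big_seq => m /(path_letters_inner pQ) [_ mQ] /=.
have [am|nam] := eqVneq (alpha m.1) (alpha u).
  by rewrite (ccol_side uP mQ am au_pos) mulr1n mulr1.
by rewrite /ccol eq_sym (negbTE nam) mulr0n !mulr0 mul0r.
Qed.

Lemma sum_Pletters_Qend_column b : b = alpha sQ \/ b = alpha (last sQ r) ->
  \sum_(l <- path_letters sP p) sgb l.2 * (alpha l.1 == b)%:R = 0.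
Proof.
move=> bQ; have [b_pos | b_le0] := ltP 0 b.
  rewrite (sum_path_letters (phi := fun a => (a == b)%:R) pP) ?(lt_eqF b_pos) //=.
  have [tb|_] := eqVneq (alpha (last sP p)) b.
    by case: (endsPQ b_pos (or_intror (esym tb)) bQ).
  have [sb|_] := eqVneq (alpha sP) b.
    by case: (endsPQ b_pos (or_introl (esym sb)) bQ).
  by rewrite subrr.
apply: big1_seq => l /andP [_ /(path_letters_inner pP) [/andP [lS _] _]].
by rewrite (gt_eqF (le_lt_trans b_le0 (alpha_gt0 lS))) mulr0n mulr0.
Qed.

Lemma sum_ccol_letters_eq0 : \sum_(l <- path_letters sP p) \sum_(m <- path_letters sQ r)
  ccol alpha beta l.1 m.1 * (sgb l.2 * sgb m.2) = 0.
Proof.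
transitivity (\sum_(l <- path_letters sP p)
  (column_side (alpha (last sQ r)) * (sgb l.2 * (alpha l.1 == alpha (last sQ r))%:R)
   - column_side (alpha sQ) * (sgb l.2 * (alpha l.1 == alpha sQ)%:R))).
  apply: eq_big_seq => l /(path_letters_inner pP) [/andP [lS _] lP].
  under eq_bigr do rewrite mulrCA.
  rewrite -mulr_sumr sum_ccol_vertex_letters ?alpha_gt0 // mulrBr.
  by congr (_ - _); exact: mulrCA.
by rewrite sumrB -!mulr_sumr !sum_Pletters_Qend_column ?mulr0 ?subrr //; [left | right].
Qed.

Lemma sum_letter_qexp_eq0 : \sum_(l <- path_letters sP p) \sum_(m <- path_letters sQ r)
  letter_qexp alpha beta l m = 0.
Proof.
transitivity (\sum_(l <- path_letters sP p) \sum_(m <- path_letters sQ r)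
    crow alpha beta l.1 m.1 * (sgb l.2 * sgb m.2) +
  \sum_(l <- path_letters sP p) \sum_(m <- path_letters sQ r)
    ccol alpha beta l.1 m.1 * (sgb l.2 * sgb m.2)).
  rewrite -big_split; apply: eq_bigr => l _; rewrite -big_split; apply: eq_bigr => m _.
  by rewrite /letter_qexp /qexp mulrDl.
by rewrite sum_crow_letters_eq0 sum_ccol_letters_eq0 addr0.
Qed.

End TwoPaths.
End SEGraph.

Unset Implicit Arguments.

Theorem lemmaA1 (R : realType) (V : finType) (E : rel V) (alpha beta : V -> R)
    (Src Snk : {set V}) (K : fieldType) (q : K) (A : unitAlgType K) (x : V -> A)
    (sP : V) (p : seq V) (sQ : V) (r : seq V) :
  SE_graph E alpha beta Src Snk ->
  q != 0 ->
  LG_relations E alpha beta Src Snk x q ->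
  path E sP p -> path E sQ r ->
  standard alpha beta sP p -> standard alpha beta sQ r ->
  weakly_intersecting alpha beta sP p sQ r ->
  (forall a : R, 0 < a ->
     (a = alpha sP \/ a = alpha (last sP p)) ->
     (a = alpha sQ \/ a = alpha (last sQ r)) -> False) ->
  pweight alpha beta Src Snk x sP p * pweight alpha beta Src Snk x sQ r =
  pweight alpha beta Src Snk x sQ r * pweight alpha beta Src Snk x sP p.
Proof.
move=> G q0 LG pP pQ _ _ weakPQ endsPQ.
rewrite !pweight_letters (prod_qcomm (kap := letter_qexp alpha beta) q0); last first.
  move=> l m /(path_letters_inner G pP) [il _] /(path_letters_inner G pQ) [im _].
  exact: (letter_qcomm G q0 LG).
by rewrite (sum_letter_qexp_eq0 G pP pQ weakPQ endsPQ) expr0z scale1r.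
Qed.
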